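(* Let $\tilde\omega=\log^*\tilde\delta$, computed in the convolution algebra of $(\mathcal A,\diamond,\Delta_{\mathcal A})$. Then $\tilde\omega(\mathbf 1)=0$ and $\tilde\omega(x^s)=\frac{(-1)^{s+1}}{s}$ for $s\ge1$, and $$\omega=\tilde\omega\circ\Lambda,$$ where $\omega=\log^*\delta$ in the convolution algebra of $\mathcal H_{CK}$.
   Context: Let $k$ be a field of characteristic $0$. $\mathcal A=k[x]$ ($x^0=\mathbf 1$) with the quasi-shuffle product $\diamond$ determined by $\mathbf 1\diamond u=u\diamond\mathbf 1=u$, $x^k\diamond x^l=(x^{k-1}\diamond x^l)x+(x^k\diamond x^{l-1})x+(x^{k-1}\diamond x^{l-1})x$ for $k,l\ge1$, and the deconcatenation coproduct $\Delta_{\mathcal A}(x^n)=\sum_{r=0}^nx^r\otimes x^{n-r}$, is a connected graded Hopf algebra with counit $\varepsilon_{\mathcal A}$. $\tilde\delta:\mathcal A\to k$ is linear with $\tilde\delta(\mathbf 1)=\tilde\delta(x)=1$, $\tilde\delta(x^s)=0$ for $s\ge2$. $\mathcal H_{CK}$ is the Connes–Kreimer Hopf algebra of rooted forests (free commutative algebra on nonempty non-planar rooted trees, unit the empty forest, counit $\varepsilon$, coproduct by admissible cuts: $\Delta_{CK}(u)=\sum v\otimes w$ over decompositions of the vertex set of $u$ into $V\sqcup W$ such that no vertex of $V$ lies strictly below a vertex of $W$, $v,w$ the induced forests). $B_+$ grafts a forest onto a new root; $\Lambda:\mathcal H_{CK}\to\mathcal A$ is the unique unital algebra morphism with $\Lambda(B_+(t_1\cdots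 t_n))=(\Lambda(t_1)\diamond\cdots\diamond\Lambda(t_n))x$ (it is a Hopf algebra morphism). $\delta$ is the character of $\mathcal H_{CK}$ with $\delta(\bullet)=1$ and $\delta(t)=0$ for trees with at least two vertices. For a character $\chi$ of either Hopf algebra, $\log^*\chi=\sum_{n\ge1}\frac{(-1)^{n+1}}{n}(\chi-\text{counit})^{*n}$, with $*$ the convolution product. *)

From HB Require Import structures.
From mathcomp Require Import all_boot all_order all_algebra.
Set Implicit Arguments. Unset Strict Implicit. Unset Printing Implicit Defensive.
Import Order.TTheory GRing.Theory Num.Theory.
Local Open Scope ring_scope.

(* ---------- Rooted forests (planar representatives) ---------- *)
Inductive rtree := Node of seq rtree.
Definition forest := seq rtree.

Fixpoint nvt (t : rtree) : nat := let: Node cs := t in (sumn (map nvt cs)).+1.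
Definition nvf (f : forest) : nat := sumn (map nvt f).

(* Vertices of a forest are numbered 0 .. nvf f - 1 in preorder.
   ind_t P o t : the forest induced on the vertices of t (numbered from o)
   satisfying P (a vertex's parent in the induced forest is its nearest
   proper ancestor satisfying P). *)
Fixpoint ind_t (P : pred nat) (o : nat) (t : rtree) {struct t} : forest :=
  let: Node cs := t in
  let kids :=
    (fix ind_s (o' : nat) (s : seq rtree) {struct s} : forest :=
       match s with
       | [::] => [::]
       | c :: s' => ind_t P o' c ++ ind_s (o' + nvt c)%N s'
       end) o.+1 cs in
  if P o then [:: Node kids] else kids.

Fixpoint ind_f (P : pred nat) (o : nat) (f : forest) : forest :=
  match f with
  | [::] => [::]
  | c :: s' => ind_t P o c ++ ind_f P (o + nvt c)%N s'
  end.

Definition induced (P : pred nat) (f : forest) : forest := ind_f P 0 f.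

Fixpoint ancs_t (o : nat) (t : rtree) {struct t} : seq (seq nat) :=
  let: Node cs := t in
  [::] :: map (cons o)
    ((fix ancs_s (o' : nat) (s : seq rtree) {struct s} : seq (seq nat) :=
        match s with
        | [::] => [::]
        | c :: s' => ancs_t o' c ++ ancs_s (o' + nvt c)%N s'
        end) o.+1 cs).

Fixpoint ancs_f (o : nat) (f : forest) : seq (seq nat) :=
  match f with
  | [::] => [::]
  | c :: s' => ancs_t o c ++ ancs_f (o + nvt c)%N s'
  end.

(* j lies strictly below i (j is a proper ancestor of i, roots at the bottom) *)
Definition strictly_below (f : forest) (j i : nat) : bool :=
  j \in nth [::] (ancs_f 0 f) i.

(* V (the left part) is admissible: no vertex of V lies strictly below a
   vertex of W = complement of V. *)
Definition admissible (f : forest) (V : {set 'I_(nvf f)}) : bool :=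
  [forall i : 'I_(nvf f), forall j : 'I_(nvf f),
     strictly_below f j i ==> ~~ ((j \in V) && (i \notin V))].

Definition idx_pred (n : nat) (V : {set 'I_n}) : pred nat :=
  fun m => m \in [seq val i | i in V].

Definition eps_CK (k : fieldType) (f : forest) : k := if f is [::] then 1 else 0.

Definition conv_CK (k : fieldType) (phi psi : forest -> k) (f : forest) : k :=
  \sum_(V : {set 'I_(nvf f)} | admissible V)
     phi (induced (idx_pred V) f) * psi (induced (idx_pred (~: V)) f).

Fixpoint convpow_CK (k : fieldType) (phi : forest -> k) (n : nat) : forest -> k :=
  if n is n'.+1 then conv_CK phi (convpow_CK phi n') else @eps_CK k.

(* partial sum  sum_{n=1}^N (-1)^{n+1}/n (chi - eps)^{*n}  of log^* chi *)
Definition log_partial_CK (k : fieldType) (N : nat) (chi : forest -> k) (f : forest) : k :=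
  \sum_(1 <= n < N.+1)
     ((-1) ^+ n.+1 / n%:R) * convpow_CK (fun g => chi g - eps_CK k g) n f.

Definition delta_CK (k : fieldType) (f : forest) : k :=
  \prod_(t <- f) (if t is Node [::] then 1 else 0).

(* ---------- The Hopf algebra A = k[x]; functionals given by values on x^n ---------- *)
Definition eps_A (k : fieldType) (n : nat) : k := (n == 0%N)%:R.

Definition conv_A (k : fieldType) (phi psi : nat -> k) (n : nat) : k :=
  \sum_(r < n.+1) phi r * psi (n - r)%N.

Fixpoint convpow_A (k : fieldType) (phi : nat -> k) (n : nat) : nat -> k :=
  if n is n'.+1 then conv_A phi (convpow_A phi n') else @eps_A k.

Definition log_partial_A (k : fieldType) (N : nat) (chi : nat -> k) (s : nat) : k :=
  \sum_(1 <= n < N.+1)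
     ((-1) ^+ n.+1 / n%:R) * convpow_A (fun m => chi m - eps_A k m) n s.

Definition delta_tilde (k : fieldType) (s : nat) : k := if (s <= 1)%N then 1 else 0.

Definition eval_A (k : fieldType) (phi : nat -> k) (p : {poly k}) : k :=
  \sum_(i < size p) p`_i * phi i.

(* quasi-shuffle product on monomials: qsh a b = x^a <> x^b *)
Fixpoint qsh (k : fieldType) (a : nat) {struct a} : nat -> {poly k} :=
  fix qsh_a (b : nat) : {poly k} :=
    match a, b with
    | 0%N, _ => 'X^b
    | _, 0%N => 'X^a
    | a'.+1, b'.+1 => (qsh k a' b + qsh_a b' + qsh k a' b') * 'X
    end.

Definition diamond (k : fieldType) (p q : {poly k}) : {poly k} :=
  \sum_(i < size p) \sum_(j < size q) (p`_i * q`_j) *: qsh k i j.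

Fixpoint Lambda_t (k : fieldType) (t : rtree) : {poly k} :=
  let: Node cs := t in foldr (@diamond k) 1 (map (Lambda_t k) cs) * 'X.

Definition Lambda (k : fieldType) (f : forest) : {poly k} :=
  foldr (@diamond k) 1 (map (Lambda_t k) f).

(* Write phi = delta - eps on H_CK and phi~ = delta~ - eps on A.  Since phi~ is
   the coordinate of x, phi~^{*n}(x^s) = [s = n]; this gives omega~ at once and
   reduces omega = omega~ o Lambda to  phi^{*n}(f) = [x^n] Lambda(f).
   We prove the latter through binomial transforms.  On H_CK, the transform
   binom_phi m = sum_i C(m,i) phi^{*i} satisfies a leaf-removal recursion:
   value at m+1 on f = sum over the sets V of leaves of f of the value at m on
   f - V, because an admissible cut whose left part is a forest of bullets is
   exactly a set of leaves.  On A, tau_m : x^i |-> C(m,i) is a character of the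
   quasi-shuffle algebra and tau_{m+1}(p x) = sum_{j<=m} tau_j(p) (hockey stick),
   so tau_m o Lambda satisfies the same recursion.  Both equal eps at m = 0, and
   binomial inversion concludes. *)

From HB Require Import structures.
From mathcomp Require Import all_boot all_order all_algebra zify.
Import GRing.Theory.
Set Implicit Arguments. Unset Strict Implicit. Unset Printing Implicit Defensive.

Section ForestInduction.
Variables (P : rtree -> Prop) (Q : forest -> Prop).
Hypotheses (HNode : forall cs, Q cs -> P (Node cs)) (Hnil : Q [::])
  (Hcons : forall c s, P c -> Q s -> Q (c :: s)).

Fixpoint tree_ind (t : rtree) : P t :=
  let: Node cs := t in
  HNode ((fix forest_ind (s : forest) : Q s :=
            if s is c :: s' then Hcons (tree_ind c) (forest_ind s') else Hnil) cs).

Lemma tree_forest_ind : (forall t, P t) /\ (forall f, Q f).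
Proof. by split=> [|f]; [exact: tree_ind | elim: f => // c s; apply/Hcons/tree_ind]. Qed.
End ForestInduction.

Lemma nvt_Node cs : nvt (Node cs) = (nvf cs).+1. Proof. by []. Qed.
Lemma nvf_cons c s : nvf (c :: s) = nvt c + nvf s. Proof. by []. Qed.
Lemma ind_f_cons P o c s : ind_f P o (c :: s) = ind_t P o c ++ ind_f P (o + nvt c) s.
Proof. by []. Qed.
Lemma ancs_f_cons o c s : ancs_f o (c :: s) = ancs_t o c ++ ancs_f (o + nvt c) s.
Proof. by []. Qed.

Lemma ind_t_Node P o cs :
  ind_t P o (Node cs) = if P o then [:: Node (ind_f P o.+1 cs)] else ind_f P o.+1 cs.
Proof.
rewrite /=; congr (if _ then [:: Node _] else _);
  by elim: cs o.+1 => //= c s IH o'; rewrite IH.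
Qed.

Lemma ancs_t_Node o cs : ancs_t o (Node cs) = [::] :: map (cons o) (ancs_f o.+1 cs).
Proof. by rewrite /=; congr (_ :: map _ _); elim: cs o.+1 => //= c s IH o'; rewrite IH. Qed.

Lemma size_ancs :
  (forall t o, size (ancs_t o t) = nvt t) /\ (forall f o, size (ancs_f o f) = nvf f).
Proof.
apply: tree_forest_ind => [cs IH|//|c s IHc IHs] o.
- by rewrite ancs_t_Node /= size_map IH.
- by rewrite ancs_f_cons size_cat IHc IHs.
Qed.

Fixpoint inner_t (t : rtree) : seq bool :=
  let: Node cs := t in (~~ nilp cs) :: flatten (map inner_t cs).
Definition inner_f (f : forest) : seq bool := flatten (map inner_t f).

Lemma inner_t_Node cs : inner_t (Node cs) = (~~ nilp cs) :: inner_f cs. Proof. by []. Qed.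
Lemma inner_f_cons c s : inner_f (c :: s) = inner_t c ++ inner_f s. Proof. by []. Qed.

Lemma size_inner :
  (forall t, size (inner_t t) = nvt t) /\ (forall f, size (inner_f f) = nvf f).
Proof.
apply: tree_forest_ind => [cs IH|//|c s IHc IHs].
- by rewrite inner_t_Node nvt_Node /= IH.
- by rewrite inner_f_cons nvf_cons size_cat IHc IHs.
Qed.

Lemma nth_true_size (s : seq bool) i : nth false s i -> i < size s.
Proof. by apply: contraLR; rewrite -leqNgt => /(nth_default false) ->. Qed.

Lemma nth_mem_size (T : eqType) (s : seq (seq T)) i x : x \in nth [::] s i -> i < size s.
Proof. by apply: contraLR; rewrite -leqNgt => /(nth_default [::]) ->. Qed.

Lemma eq_induced :
  (forall t o P Q, {in [pred i | o <= i < o + nvt t], P =1 Q} -> ind_t P o t = ind_t Q o t)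
  /\ (forall f o P Q, {in [pred i | o <= i < o + nvf f], P =1 Q} -> ind_f P o f = ind_f Q o f).
Proof.
apply: tree_forest_ind => [cs IH|//|c s IHc IHs] o P Q PQ.
- rewrite !ind_t_Node PQ ?inE ?nvt_Node; last by lia.
  by rewrite (IH o.+1 P Q) // => i; rewrite !inE => Hi; apply: PQ; rewrite inE nvt_Node; lia.
- rewrite !ind_f_cons (IHc o P Q) ?(IHs (o + nvt c) P Q) // => i; rewrite inE => Hi;
    by apply: PQ; rewrite inE nvf_cons; lia.
Qed.

Lemma induced_all :
  (forall t o (P : pred nat), {in [pred i | o <= i < o + nvt t], forall i, P i} ->
     ind_t P o t = [:: t])
  /\ (forall f o (P : pred nat), {in [pred i | o <= i < o + nvf f], forall i, P i} ->
     ind_f P o f = f).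
Proof.
apply: tree_forest_ind => [cs IH|//|c s IHc IHs] o P HP.
- rewrite ind_t_Node HP ?inE ?nvt_Node; last by lia.
  by rewrite (IH o.+1 P) // => i; rewrite inE => Hi; apply: HP; rewrite inE nvt_Node; lia.
- rewrite ind_f_cons (IHc o P) ?(IHs (o + nvt c) P) // => i; rewrite inE => Hi;
    by apply: HP; rewrite inE nvf_cons; lia.
Qed.

Lemma induced_nilp :
  (forall t o (P : pred nat), nilp (ind_t P o t) = ~~ has P (iota o (nvt t)))
  /\ (forall f o (P : pred nat), nilp (ind_f P o f) = ~~ has P (iota o (nvf f))).
Proof.
apply: tree_forest_ind => [cs IH|//|c s IHc IHs] o P.
- by rewrite ind_t_Node nvt_Node /=; case: (P o) => //=; exact: IH.
- by rewrite ind_f_cons cat_nilp nvf_cons iotaD has_cat negb_or IHc IHs.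
Qed.

Definition bullets (g : forest) : bool :=
  all (fun t => if t is Node [::] then true else false) g.

Lemma induced_bullets :
  (forall t o (P : pred nat), (forall i, nth false (inner_t t) i -> ~~ P (o + i)) ->
     bullets (ind_t P o t))
  /\ (forall f o (P : pred nat), (forall i, nth false (inner_f f) i -> ~~ P (o + i)) ->
     bullets (ind_f P o f)).
Proof.
apply: tree_forest_ind => [cs IH|//|c s IHc IHs] o P HP.
- rewrite ind_t_Node; case Po: (P o).
  + by move: (HP 0); rewrite /= addn0 Po; case: cs {IH HP} => //= c s /(_ isT).
  + by apply: IH => i Hi; rewrite addSnnS; apply: (HP i.+1).
- rewrite ind_f_cons /bullets all_cat; apply/andP; split.
  + apply: IHc => i Hi; apply: HP.
    by rewrite inner_f_cons nth_cat (nth_true_size Hi) Hi.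
  + apply: IHs => i Hi; rewrite -addnA; apply: HP.
    by rewrite inner_f_cons nth_cat (size_inner.1 c) ltnNge leq_addr /= addKn.
Qed.

Lemma induced_not_bullets :
  (forall t o (P : pred nat) i, nth false (inner_t t) i -> P (o + i) -> P (o + i).+1 ->
     ~~ bullets (ind_t P o t))
  /\ (forall f o (P : pred nat) i, nth false (inner_f f) i -> P (o + i) -> P (o + i).+1 ->
     ~~ bullets (ind_f P o f)).
Proof.
apply: tree_forest_ind => [cs IH|//|c s IHc IHs] o P i.
- rewrite ind_t_Node inner_t_Node; case: i => [|i].
  + rewrite /= addn0; case: cs {IH} => [//|[ccs] s] _ Po Po1.
    by rewrite Po ind_f_cons ind_t_Node Po1.
  + rewrite /= -addSnnS => Hi P1 P2; case Po: (P o); last exact: (IH o.+1 P i).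
    suff : ~~ nilp (ind_f P o.+1 cs) by case: (ind_f P o.+1 cs).
    rewrite induced_nilp.2 negbK; apply/hasP; exists (o.+1 + i) => //.
    by rewrite mem_iota leq_addr /= ltn_add2l -(size_inner.2 cs) (nth_true_size Hi).
- by rewrite /inner_f /= nth_nil.
- rewrite inner_f_cons ind_f_cons /bullets all_cat negb_and nth_cat (size_inner.1 c).
  case: ltnP => Hi Hc P1 P2; first by rewrite (IHc o P i).
  by rewrite (IHs (o + nvt c) P (i - nvt c)) ?orbT // -addnA subnKC.
Qed.

Lemma inner_ancestor :
  (forall t o i, nth false (inner_t t) i -> o + i \in nth [::] (ancs_t o t) i.+1)
  /\ (forall f o i, nth false (inner_f f) i -> o + i \in nth [::] (ancs_f o f) i.+1).
Proof.
apply: tree_forest_ind => [cs IH|//|c s IHc IHs] o i.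
- rewrite ancs_t_Node inner_t_Node; case: i => [|i] /=.
  + case: cs {IH} => [//|c s] _.
    by rewrite (nth_map [::]) ?addn0 ?mem_head // ancs_f_cons size_cat (size_ancs.1 c); case: c.
  + move=> /(IH o.+1) Hanc; rewrite (nth_map [::]); last exact: nth_mem_size Hanc.
    by rewrite in_cons addnS -addSn Hanc orbT.
- by rewrite /inner_f /= nth_nil.
- rewrite inner_f_cons ancs_f_cons !nth_cat (size_inner.1 c) (size_ancs.1 c).
  case: (ltnP i (nvt c)) => Hi Hc.
  + have Hanc := IHc o i Hc; have := nth_mem_size Hanc.
    by rewrite (size_ancs.1 c) => ->.
  + have := IHs (o + nvt c) (i - nvt c) Hc; rewrite -addnA subnKC //.
    by rewrite ltnNge (leq_trans Hi) // subSn.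
Qed.

Lemma ancestor_inner :
  (forall t o i j, j \in nth [::] (ancs_t o t) i -> (o <= j) && nth false (inner_t t) (j - o))
  /\ (forall f o i j, j \in nth [::] (ancs_f o f) i ->
       (o <= j) && nth false (inner_f f) (j - o)).
Proof.
apply: tree_forest_ind => [cs IH o i j|o i j|c s IHc IHs o i j].
- rewrite ancs_t_Node inner_t_Node; case: i => [|i] //=.
  case: (ltnP i (size (ancs_f o.+1 cs))) => Hi; last by rewrite nth_default ?size_map.
  rewrite (nth_map [::]) // in_cons => /orP [/eqP -> | Hj].
  + by rewrite leqnn subnn /=; move: Hi; rewrite (size_ancs.2 cs); case: cs IH.
  + case/andP: (IH o.+1 i j Hj) => H1 H2.
    have -> : j - o = (j - o.+1).+1 by lia.
    by rewrite /= H2 andbT; lia.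
- by rewrite /= nth_nil.
- rewrite inner_f_cons ancs_f_cons nth_cat (size_ancs.1 c) nth_cat (size_inner.1 c).
  case: (ltnP i (nvt c)) => Hi Hj.
  + case/andP: (IHc o i j Hj) => H1 H2.
    by rewrite H1 -(size_inner.1 c) (nth_true_size H2).
  + case/andP: (IHs (o + nvt c) _ j Hj) => H1 H2.
    have -> : (j - o < nvt c) = false by lia.
    by rewrite -subnDA H2 andbT; lia.
Qed.

Definition admissible_pred (f : forest) (P : pred nat) : bool :=
  [forall i : 'I_(nvf f), forall j : 'I_(nvf f),
     strictly_below f j i ==> ~~ (P j && ~~ P i)].
Definition leaves_only (f : forest) (P : pred nat) : bool :=
  [forall i : 'I_(nvf f), P i ==> ~~ nth false (inner_f f) i].

(* An admissible cut whose left part is a forest of bullets is exactly a set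
   of leaves: this is the combinatorial heart of the recursion for delta. *)
Lemma admissible_bullets f P :
  admissible_pred f P && bullets (induced P f) = leaves_only f P.
Proof.
apply/idP/idP.
- case/andP => Hadm Hbul; apply/forallP => i; apply/implyP => Pi; apply/negP => Hin.
  have Hanc := inner_ancestor.2 f 0 i Hin; rewrite add0n in Hanc.
  have Hi1 : i.+1 < nvf f by move: (nth_mem_size Hanc); rewrite (size_ancs.2 f 0).
  have := forallP Hadm (Ordinal Hi1) => /forallP /(_ i) /implyP /(_ Hanc).
  rewrite /= Pi /= negbK => Pi1.
  by have := induced_not_bullets.2 f 0 P i Hin; rewrite add0n /induced Hbul => /(_ Pi Pi1).
- move=> Hleaf; apply/andP; split.
  + apply/forallP => i; apply/forallP => j; apply/implyP => /(ancestor_inner.2 f 0 i j).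
    rewrite subn0 => /= Hj; have /implyP Pj := forallP Hleaf j.
    by apply/negP => /andP [/Pj]; rewrite Hj.
  + apply: (induced_bullets.2 f 0 P) => i Hin; rewrite add0n.
    have Hi : i < nvf f by rewrite -(size_inner.2 f) (nth_true_size Hin).
    have /implyP Pi := forallP Hleaf (Ordinal Hi).
    by apply/negP => /Pi; rewrite /= Hin.
Qed.

Local Open Scope ring_scope.

(* masks n : all boolean words of length n; a word m encodes the set of
   vertices {i | nth false m i}. *)
Fixpoint masks (n : nat) : seq (seq bool) :=
  if n is n'.+1 then [seq false :: m | m <- masks n'] ++ [seq true :: m | m <- masks n']
  else [:: [::]].

Lemma size_masks n m : m \in masks n -> size m = n.
Proof.
elim: n m => [|n IH] m /=; first by rewrite inE => /eqP ->.
by rewrite mem_cat => /orP [] /mapP [m' /IH <- ->].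
Qed.

Lemma sum_masks_add (R : nmodType) a b (F : seq bool -> R) :
  \sum_(m <- masks (a + b)) F m = \sum_(m1 <- masks a) \sum_(m2 <- masks b) F (m1 ++ m2).
Proof.
elim: a F => [|a IH] F; first by rewrite add0n big_seq1.
by rewrite addSn /= !big_cat !big_map /= (IH (fun m => F (false :: m))) (IH (fun m => F _)).
Qed.

Lemma sum_masks_empty (R : nmodType) n (Y : seq bool -> R) :
  \sum_(m <- masks n) (if has (nth false m) (iota 0 n) then 0 else Y m) = Y (nseq n false).
Proof.
elim: n Y => [|n IH] Y; first by rewrite big_seq1.
rewrite [masks _]/= big_cat /= !big_map [X in _ + X = _]big1 // addr0 -(IH (fun m => Y (false :: m))).
apply: eq_bigr => m _; rewrite (iotaDl 1 0) has_map.
by congr (if _ then _ else _); apply: eq_has => i; rewrite /= add1n.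
Qed.

Lemma idx_predE n (V : {set 'I_n}) (i : 'I_n) : idx_pred V i = (i \in V).
Proof. by rewrite /idx_pred /image_mem mem_map ?mem_enum //; exact: val_inj. Qed.

Lemma sum_sets_masks (R : nmodType) n (H : pred nat -> R) :
  (forall P Q : pred nat, {in gtn n, P =1 Q} -> H P = H Q) ->
  \sum_(V : {set 'I_n}) H (idx_pred V) = \sum_(m <- masks n) H (nth false m).
Proof.
elim: n H => [|n IH] H Hext.
  rewrite (big_pred1 set0) ?big_seq1; first exact: Hext.
  by move=> V /=; apply/esym/eqP/setP => -[].
pose cons_set (p : bool * {set 'I_n}) : {set 'I_n.+1} :=
  [set i : 'I_n.+1 | if unlift ord0 i is Some j then j \in p.2 else p.1].
pose uncons_set (V : {set 'I_n.+1}) : bool * {set 'I_n} :=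
  (ord0 \in V, [set j : 'I_n | lift ord0 j \in V]).
rewrite (reindex cons_set) /=; last first.
  exists uncons_set => [[b W] _ | V _].
    rewrite /uncons_set /cons_set inE unlift_none; congr pair.
    by apply/setP => j; rewrite !inE liftK.
  by apply/setP => i; rewrite /cons_set /uncons_set !inE; case: unliftP => [j ->|->]; rewrite ?inE.
rewrite -(pair_big xpredT xpredT (fun b W => H (idx_pred (cons_set (b, W))))) big_bool /=.
pose Hb b (P : pred nat) := H (fun i => if i is i'.+1 then P i' else b).
have cons_setE b W : H (idx_pred (cons_set (b, W))) = Hb b (idx_pred W).
  apply: Hext => i Hi; rewrite -[i]/(nat_of_ord (Ordinal Hi)) idx_predE /cons_set inE /=.
  by case: unliftP => [j|] /(congr1 val) /= ->; rewrite ?lift0 /= ?idx_predE.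
have Hb_ext b : forall P Q : pred nat, {in gtn n, P =1 Q} -> Hb b P = Hb b Q.
  by move=> P Q PQ; apply: Hext => -[|i] // Hi; apply: PQ.
under eq_bigr do rewrite cons_setE; under [X in _ + X]eq_bigr do rewrite cons_setE.
rewrite (IH _ (Hb_ext true)) (IH _ (Hb_ext false)) big_cat !big_map addrC.
by congr (_ + _); apply: eq_bigr => m _; apply: Hext => -[|i].
Qed.

Fixpoint avoids (m h : seq bool) : bool :=
  if (m, h) is (b :: m', c :: h') then ~~ (b && c) && avoids m' h' else true.

Lemma avoidsP m h : reflect (forall i, nth false m i -> ~~ nth false h i) (avoids m h).
Proof.
elim: m h => [|b m IH] [|c h] /=; try by apply: ReflectT => i; rewrite ?nth_nil.
apply: (iffP andP) => [[Hbc /IH Hmh] [|i] //= Hb | Hmh]; first by move: Hbc; rewrite Hb.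
  exact: Hmh.
split; first by move: (Hmh 0) => /=; case: (b); case: (c) => // /(_ isT).
by apply/IH => i; exact: (Hmh i.+1).
Qed.

Lemma avoids_cat m1 m2 h1 h2 :
  size m1 = size h1 -> avoids (m1 ++ m2) (h1 ++ h2) = avoids m1 h1 && avoids m2 h2.
Proof. by elim: m1 h1 => [|b m IH] [|c h] //= [/IH ->]; rewrite andbA. Qed.

Lemma leaves_only_avoids f m : leaves_only f (nth false m) = avoids m (inner_f f).
Proof.
apply/forallP/avoidsP => Hm i.
- move=> Hmi; case: (ltnP i (nvf f)) => Hi; first exact: (implyP (Hm (Ordinal Hi))).
  by rewrite nth_default // (size_inner.2 f).
- exact/implyP/Hm.
Qed.

Section ConvolutionCK.
Variable k : fieldType.

Definition phi_CK (g : forest) : k := delta_CK k g - eps_CK k g.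
Definition phi_pow (n : nat) : forest -> k := convpow_CK phi_CK n.

Lemma phi_CK_bullets g : phi_CK g = (bullets g && ~~ nilp g)%:R.
Proof.
rewrite /phi_CK; have -> : delta_CK k g = (bullets g)%:R.
  by rewrite /delta_CK; elim: g => [|[[|? ?]] g IH]; rewrite ?big_nil // big_cons IH ?mul1r ?mul0r.
by case: g => [|t g]; rewrite /eps_CK /= ?subrr ?subr0 ?andbT.
Qed.

(* The left part of a cut contributes to phi * psi only if it is a nonempty
   forest of bullets, i.e. (admissible_bullets) a nonempty set of leaves. *)
Lemma phi_pow_S n f :
  phi_pow n.+1 f = \sum_(m <- masks (nvf f))
    (avoids m (inner_f f) && has (nth false m) (iota 0 (nvf f)))%:R
      * phi_pow n (induced (predC (nth false m)) f).
Proof.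
pose H P := (admissible_pred f P)%:R * phi_CK (induced P f) * phi_pow n (induced (predC P) f).
have H_ext P Q : {in gtn (nvf f), P =1 Q} -> H P = H Q.
  move=> PQ; have PQ' : {in [pred i | 0 <= i < 0 + nvf f]%N, P =1 Q} by move=> i; apply: PQ.
  have PQ'' : {in [pred i | 0 <= i < 0 + nvf f]%N, predC P =1 predC Q} by move=> i /PQ' /= ->.
  rewrite /H /induced (eq_induced.2 f 0 _ _ PQ') (eq_induced.2 f 0 _ _ PQ'').
  suff -> : admissible_pred f P = admissible_pred f Q by [].
  by apply: eq_forallb => i; apply: eq_forallb => j; rewrite !PQ ?unfold_in /= ?ltn_ord.
rewrite /phi_pow /= /conv_CK big_mkcond /= -/(phi_pow n).
transitivity (\sum_(V : {set 'I_(nvf f)}) H (idx_pred V)).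
  apply: eq_bigr => V _; rewrite /H.
  have -> : admissible V = admissible_pred f (idx_pred V).
    by apply: eq_forallb => i; apply: eq_forallb => j; rewrite !idx_predE.
  have compl : {in [pred i | 0 <= i < 0 + nvf f]%N, idx_pred (~: V) =1 predC (idx_pred V)}.
    by move=> i; rewrite inE add0n => Hi; rewrite /= -[i]/(nat_of_ord (Ordinal Hi)) !idx_predE inE.
  rewrite /induced (eq_induced.2 f 0 _ _ compl).
  by case: admissible_pred; rewrite ?mul1r ?mul0r.
rewrite sum_sets_masks //; apply: eq_bigr => m _.
rewrite /H phi_CK_bullets -natrM mulnb andbA admissible_bullets leaves_only_avoids.
by rewrite /induced induced_nilp.2 negbK.
Qed.

(* The binomial transform of the powers of phi; by the binomial theorem it is
   delta^{*m}, but only its recursion in m is needed. *)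
Definition binom_phi (m : nat) (f : forest) : k :=
  \sum_(0 <= i < m.+1) 'C(m, i)%:R * phi_pow i f.

Lemma binom_phi0 f : binom_phi 0 f = eps_CK k f.
Proof. by rewrite /binom_phi big_nat1 bin0 mul1r. Qed.

Lemma binom_phi_S m f : binom_phi m.+1 f = \sum_(mk <- masks (nvf f))
   (avoids mk (inner_f f))%:R * binom_phi m (induced (predC (nth false mk)) f).
Proof.
set X := fun mk => binom_phi m (induced (predC (nth false mk)) f).
have shift : phi_pow 0 f + \sum_(0 <= i < m.+1) 'C(m, i.+1)%:R * phi_pow i.+1 f
    = binom_phi m f.
  rewrite /binom_phi [RHS]big_nat_recl // bin0 mul1r; congr (_ + _).
  by rewrite big_nat_recr //= bin_small // mul0r addr0.
have step : \sum_(0 <= i < m.+1) 'C(m, i)%:R * phi_pow i.+1 f = \sum_(mk <- masks (nvf f))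
    (avoids mk (inner_f f) && has (nth false mk) (iota 0 (nvf f)))%:R * X mk.
  under eq_bigr do rewrite phi_pow_S mulr_sumr.
  rewrite exchange_big /=; apply: eq_bigr => mk _.
  by rewrite /X /binom_phi mulr_sumr; apply: eq_bigr => i _; rewrite mulrCA.
rewrite /binom_phi big_nat_recl //= bin0 mul1r.
under eq_bigr do rewrite binS natrD mulrDl.
have empty : binom_phi m f = \sum_(mk <- masks (nvf f))
    (if has (nth false mk) (iota 0 (nvf f)) then 0 else (avoids mk (inner_f f))%:R * X mk).
  rewrite sum_masks_empty; have -> : avoids (nseq (nvf f) false) (inner_f f).
    by apply/avoidsP => i; rewrite nth_nseq if_same.
  by rewrite mul1r /X /induced induced_all.2 // => i _; rewrite /= nth_nseq if_same.
rewrite big_split /= addrA shift step empty -big_split; apply: eq_bigr => mk _.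
by case: has => /=; rewrite ?andbT ?andbF ?mul0r ?addr0 ?add0r.
Qed.

End ConvolutionCK.

Section CharactersA.
Variable k : fieldType.
Implicit Types (p q : {poly k}) (phi : nat -> k).

Lemma eval_A_widen phi p B :
  (size p <= B)%N -> eval_A phi p = \sum_(i < B) p`_i * phi i.
Proof.
move=> HB; rewrite /eval_A (big_ord_widen B (fun i => p`_i * phi i) HB) big_mkcond /=.
by apply: eq_bigr => i _; case: ltnP => // Hi; rewrite nth_default // mul0r.
Qed.

Lemma eval_AD phi p q : eval_A phi (p + q) = eval_A phi p + eval_A phi q.
Proof.
rewrite !(@eval_A_widen phi _ (maxn (size p) (size q))) ?leq_maxl ?leq_maxr ?size_polyD //.
by rewrite -big_split; apply: eq_bigr => i _; rewrite coefD mulrDl.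
Qed.

Lemma eval_AZ phi c p : eval_A phi (c *: p) = c * eval_A phi p.
Proof.
rewrite !(@eval_A_widen phi _ (size p)) ?size_scale_leq // mulr_sumr.
by apply: eq_bigr => i _; rewrite coefZ mulrA.
Qed.

Lemma eval_A_sum phi (I : Type) (r : seq I) (P : pred I) (F : I -> {poly k}) :
  eval_A phi (\sum_(i <- r | P i) F i) = \sum_(i <- r | P i) eval_A phi (F i).
Proof.
apply: (big_morph (eval_A phi) (eval_AD phi)).
by rewrite /eval_A size_poly0 big_ord0.
Qed.

Lemma eval_A_Xn phi n : eval_A phi 'X^n = phi n.
Proof.
rewrite /eval_A size_polyXn big_ord_recr /= coefXn eqxx mul1r big1 ?add0r // => i _.
by rewrite coefXn (ltn_eqF (ltn_ord i)) mul0r.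
Qed.

(* tau m : x^i |-> C(m, i), i.e. the character delta~^{*m} of A. *)
Definition tau (m : nat) : {poly k} -> k := eval_A (fun i => 'C(m, i)%:R).

Lemma sum_binomial_column m i : (\sum_(0 <= j < m) 'C(j, i))%N = 'C(m, i.+1).
Proof.
elim: m => [|m IH]; first by rewrite big_geq // bin0n.
by rewrite big_nat_recr //= IH binS addnC.
Qed.

Lemma tau_mulX m p : tau m (p * 'X) = \sum_(0 <= j < m) tau j p.
Proof.
have Hs : (size (p * 'X)%R <= (size p).+1)%N.
  by apply: (leq_trans (size_polyMleq _ _)); rewrite size_polyX addn2.
rewrite /tau (eval_A_widen _ Hs) big_ord_recl coefMX /= mul0r add0r.
under eq_bigr do rewrite coefMX /= -sum_binomial_column natr_sum mulr_sumr.
by rewrite exchange_big.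
Qed.

(* The identity behind tau_m (x^a <> x^b) = C(m,a) C(m,b). *)
Lemma sum_binomial_products a b m :
  (\sum_(0 <= j < m)
     ('C(j, a) * 'C(j, b.+1) + 'C(j, a.+1) * 'C(j, b) + 'C(j, a) * 'C(j, b)))%N
  = ('C(m, a.+1) * 'C(m, b.+1))%N.
Proof.
elim: m => [|m IH]; first by rewrite big_geq.
by rewrite big_nat_recr //= IH !binS !mulnDl !mulnDr; lia.
Qed.

Lemma qsh0n b : qsh k 0 b = 'X^b. Proof. by case: b. Qed.
Lemma qshS0 a : qsh k a.+1 0 = 'X^(a.+1). Proof. by []. Qed.
Lemma qshSS a b : qsh k a.+1 b.+1 = (qsh k a b.+1 + qsh k a.+1 b + qsh k a b) * 'X.
Proof. by []. Qed.

Lemma tau_qsh m a b : tau m (qsh k a b) = 'C(m, a)%:R * 'C(m, b)%:R.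
Proof.
elim: a b m => [|a IHa] b m; first by rewrite qsh0n /tau eval_A_Xn bin0 mul1r.
elim: b m => [|b IHb] m; first by rewrite qshS0 /tau eval_A_Xn bin0 mulr1.
rewrite qshSS tau_mulX.
under eq_bigr do rewrite /tau !eval_AD -!/(tau _) IHa IHb IHa -!natrM -!natrD.
by rewrite -natr_sum sum_binomial_products natrM.
Qed.

Lemma tau1 m : tau m 1 = 1.
Proof. by rewrite /tau -(expr0 'X) eval_A_Xn bin0. Qed.

Lemma tau_diamond m p q : tau m (diamond p q) = tau m p * tau m q.
Proof.
rewrite /diamond /tau eval_A_sum mulr_suml; apply: eq_bigr => i _.
rewrite eval_A_sum mulr_sumr; apply: eq_bigr => j _.
by rewrite eval_AZ -/(tau _) tau_qsh mulrACA.
Qed.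

Definition tau_Lambda (m : nat) (g : forest) : k := tau m (Lambda k g).

Lemma tau_Lambda_prod m g : tau_Lambda m g = \prod_(t <- g) tau m (Lambda_t k t).
Proof.
elim: g => [|t g IH]; first by rewrite big_nil /tau_Lambda tau1.
by rewrite big_cons -IH /tau_Lambda /= tau_diamond.
Qed.

Lemma tau_Lambda_cat m g1 g2 : tau_Lambda m (g1 ++ g2) = tau_Lambda m g1 * tau_Lambda m g2.
Proof. by rewrite !tau_Lambda_prod big_cat. Qed.

Lemma tau_Lambda_seq1 m t : tau_Lambda m [:: t] = tau m (Lambda_t k t).
Proof. by rewrite tau_Lambda_prod big_seq1. Qed.

Lemma tau_Lambda_t_Node m cs : tau m (Lambda_t k (Node cs)) = \sum_(0 <= j < m) tau_Lambda j cs.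
Proof. exact: tau_mulX. Qed.

Lemma tau_Lambda0 g : tau_Lambda 0 g = (nilp g)%:R.
Proof.
rewrite tau_Lambda_prod; case: g => [|[cs] g]; first by rewrite big_nil.
by rewrite big_cons tau_Lambda_t_Node big_geq // mul0r.
Qed.

Definition mask_pred (o : nat) (m : seq bool) : pred nat := fun i => ~~ nth false m (i - o).

Lemma tau_Lambda_leaves_rec :
  (forall t o m, \sum_(mk <- masks (nvt t))
       (avoids mk (inner_t t))%:R * tau_Lambda m (ind_t (mask_pred o mk) o t)
     = tau m.+1 (Lambda_t k t))
  /\ (forall f o m, \sum_(mk <- masks (nvf f))
       (avoids mk (inner_f f))%:R * tau_Lambda m (ind_f (mask_pred o mk) o f)
     = tau_Lambda m.+1 f).
Proof.
apply: tree_forest_ind => [cs IH||c s IHc IHs] o m.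
- rewrite nvt_Node [masks _]/= big_cat !big_map inner_t_Node.
  rewrite tau_Lambda_t_Node big_nat_recl // tau_Lambda0 addrC; congr (_ + _).
  + transitivity (\sum_(mk <- masks (nvf cs)) (avoids mk (inner_f cs))%:R *
         \sum_(0 <= i < m) tau_Lambda i (ind_f (mask_pred o.+1 mk) o.+1 cs)).
      apply: eq_bigr => mk _.
      rewrite ind_t_Node {1}/mask_pred subnn /= tau_Lambda_seq1 tau_Lambda_t_Node.
      congr (_ * _); apply: eq_bigr => i _; congr (tau_Lambda _ _).
      apply: eq_induced.2 => j; rewrite inE => Hj.
      by rewrite /mask_pred (_ : j - o = (j - o.+1).+1)%N //; lia.
    rewrite (eq_bigr (fun mk => \sum_(0 <= i < m) (avoids mk (inner_f cs))%:R *
               tau_Lambda i (ind_f (mask_pred o.+1 mk) o.+1 cs))) => [|mk _]; last first.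
      exact: mulr_sumr.
    by rewrite exchange_big /=; apply: eq_bigr => i _; exact: IH.
  + case: cs {IH} => [|c s].
      by rewrite big_seq1 ind_t_Node {1}/mask_pred subnn /= mul1r /tau_Lambda tau1.
    by rewrite big1 // => mk _; rewrite /= mul0r.
- by rewrite big_seq1 /= mul1r /tau_Lambda /= !tau1.
- rewrite nvf_cons sum_masks_add big_seq.
  under eq_bigr => m1 Hm1.
    have Hs : size m1 = size (inner_t c) by rewrite (size_inner.1 c); exact: size_masks Hm1.
    under eq_bigr => m2 _.
      rewrite inner_f_cons avoids_cat // ind_f_cons tau_Lambda_cat.
      have -> : ind_t (mask_pred o (m1 ++ m2)) o c = ind_t (mask_pred o m1) o c.
        apply: eq_induced.1 => i; rewrite inE => Hi.
        by rewrite /mask_pred nth_cat Hs (size_inner.1 c) (_ : i - o < nvt c)%N //; lia.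
      have -> : ind_f (mask_pred o (m1 ++ m2)) (o + nvt c) s
              = ind_f (mask_pred (o + nvt c) m2) (o + nvt c) s.
        apply: eq_induced.2 => i; rewrite inE => Hi.
        rewrite /mask_pred nth_cat Hs (size_inner.1 c) (_ : i - o < nvt c = false)%N ?subnDA //.
        lia.
      rewrite -mulnb natrM mulrACA.
      over.
    rewrite -mulr_sumr.
    over.
  by rewrite -big_seq -mulr_suml IHc IHs /tau_Lambda /= tau_diamond.
Qed.

Lemma tau_Lambda_S m f : tau_Lambda m.+1 f = \sum_(mk <- masks (nvf f))
  (avoids mk (inner_f f))%:R * tau_Lambda m (induced (predC (nth false mk)) f).
Proof.
rewrite -(tau_Lambda_leaves_rec.2 f 0 m); apply: eq_bigr => mk _; congr (_ * tau_Lambda _ _).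
by apply: eq_induced.2 => i _; rewrite /mask_pred subn0.
Qed.

Lemma eq_eval_A phi psi p : phi =1 psi -> eval_A phi p = eval_A psi p.
Proof. by move=> E; apply: eq_bigr => i _; rewrite E. Qed.

Lemma eval_A_sum_fun (I : Type) (r : seq I) (c : I -> k) (F : I -> nat -> k) p :
  eval_A (fun i => \sum_(n <- r) c n * F n i) p = \sum_(n <- r) c n * eval_A (F n) p.
Proof.
rewrite /eval_A; under eq_bigr => i _ do rewrite mulr_sumr.
rewrite exchange_big; apply: eq_bigr => n _; rewrite mulr_sumr.
by apply: eq_bigr => i _; rewrite mulrCA.
Qed.

Lemma eval_A_coef n p : eval_A (fun i => (i == n)%:R) p = p`_n.
Proof.
rewrite /eval_A (eq_bigr (fun i : 'I_(size p) => if i == n :> nat then p`_i else 0)) => [|i _].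
  by rewrite -big_mkcond big_ord1_eq; case: ltnP => // Hn; rewrite nth_default.
by case: eqP; rewrite ?mulr1 ?mulr0.
Qed.

Lemma tau_coef m p : tau m p = \sum_(0 <= i < m.+1) 'C(m, i)%:R * p`_i.
Proof.
rewrite /tau (@eval_A_widen _ p (maxn (size p) m.+1)) ?leq_maxl // big_mkord.
rewrite (big_ord_widen (maxn (size p) m.+1) (fun i => 'C(m, i)%:R * p`_i)) ?leq_maxr //.
rewrite [RHS]big_mkcond /=; apply: eq_bigr => i _; case: ltnP => Hi; first by rewrite mulrC.
by rewrite bin_small // mulr0.
Qed.

End CharactersA.

Lemma binomial_inversion (R : pzRingType) (a b : nat -> R) :
  (forall m, \sum_(0 <= i < m.+1) 'C(m, i)%:R * a i = \sum_(0 <= i < m.+1) 'C(m, i)%:R * b i) ->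
  a =1 b.
Proof.
move=> Hab n; elim/ltn_ind: n => n IH.
have := Hab n; rewrite !big_nat_recr //= binn !mul1r.
rewrite (@eq_big_nat _ _ _ 0 n _ (fun i => 'C(n, i)%:R * b i)) => [|i /andP [_ Hi]].
  exact: addrI.
by rewrite IH.
Qed.

(* The two sides satisfy the same leaf-removal recursion and agree at m = 0. *)
Lemma binom_phi_tau (k : fieldType) m f : binom_phi k m f = tau_Lambda k m f.
Proof.
elim: m f => [|m IH] f; first by rewrite binom_phi0 tau_Lambda0; case: f.
by rewrite binom_phi_S tau_Lambda_S; apply: eq_bigr => mk _; rewrite IH.
Qed.

Lemma phi_pow_coef (k : fieldType) n f : phi_pow k n f = (Lambda k f)`_n.
Proof.
apply: (@binomial_inversion _ (phi_pow k ^~ f) (fun n => (Lambda k f)`_n)) => m.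
by rewrite -tau_coef -/(tau_Lambda k m f) -binom_phi_tau.
Qed.

Section DeltaTilde.
Variable k : fieldType.

(* On A, delta~ - eps~ is the coordinate of x, so its n-th power is that of x^n. *)
Lemma phi_tilde_pow n s :
  convpow_A (fun m => delta_tilde k m - eps_A k m) n s = (s == n)%:R.
Proof.
elim: n s => [|n IH] [|s] //=; rewrite /conv_A.
  by rewrite big_ord1 /delta_tilde /eps_A /= subrr mul0r.
rewrite big_ord_recl big_ord_recl big1 => [|i _]; last first.
  by rewrite /= /delta_tilde /eps_A /= subrr mul0r.
by rewrite /= /delta_tilde /eps_A /= subrr subr0 mul0r add0r mul1r addr0 IH subn1.
Qed.

Lemma log_delta_tildeE N :
  log_partial_A N (delta_tilde k) =1
  (fun s => \sum_(1 <= n < N.+1) ((-1) ^+ n.+1 / n%:R) * (s == n)%:R).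
Proof. by move=> s; apply: eq_bigr => n _; rewrite phi_tilde_pow. Qed.

Lemma log_delta_tilde N s :
  log_partial_A N (delta_tilde k) s = if (1 <= s <= N)%N then (-1) ^+ s.+1 / s%:R else 0.
Proof.
rewrite log_delta_tildeE (eq_bigr (fun n => if n == s then (-1) ^+ n.+1 / n%:R else 0)).
  by rewrite -big_mkcond big_nat1_eq ltnS.
by move=> n _; rewrite eq_sym; case: eqP; rewrite ?mulr1 ?mulr0.
Qed.

End DeltaTilde.

Unset Implicit Arguments.
Theorem mainTheorem16 (k : fieldType) (hk : [pchar k] =i pred0) :
  (forall N : nat, log_partial_A N (delta_tilde k) 0%N = 0) /\
  (forall s N : nat, (1 <= s)%N -> (s <= N)%N ->
     log_partial_A N (delta_tilde k) s = (-1) ^+ s.+1 / s%:R) /\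
  (forall (f : forest) (N : nat), (nvf f <= N)%N ->
     log_partial_CK N (delta_CK k) f
     = eval_A (log_partial_A N (delta_tilde k)) (Lambda k f)).
Proof.
split; first by move=> N; rewrite log_delta_tilde.
split; first by move=> s N s_ge1 s_leN; rewrite log_delta_tilde s_ge1 s_leN.
move=> f N _.
rewrite (eq_eval_A _ (log_delta_tildeE k N)) eval_A_sum_fun.
by apply: eq_bigr => n _; rewrite eval_A_coef -phi_pow_coef.
Qed.
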